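(* Let $K,N$ be symmetric homogeneous stable means and $M$ a symmetric homogeneous mean, all having symmetric asymptotic expansions with coefficients $(a^K_n),(a^N_n),(a^M_n)$. If $M$ is simultaneously $(K,N)$-stabilizable and $(K,N)$-stabilized, then $a^K_1=a^N_1=a^M_1$, hence $a^K_n=a^N_n$ for all $n\in\mathbb N_0$, and $a^M_2=\frac16a^M_1(1+a^M_1)(1-4a^M_1)$.
   Context: A bi-variate mean is $M:(0,\infty)^2\to(0,\infty)$ with $\min\le M\le\max$; symmetric and homogeneous (degree 1). $M$ is stable if $M(s,t)=M\big(M(s,M(s,t)),M(M(s,t),t)\big)$. For stable $K,N$: $M$ is $(K,N)$-stabilizable if $M(s,t)=K\big(M(s,N(s,t)),M(N(s,t),t)\big)$, and $(K,N)$-stabilized if $M(s,t)=K\big(N(s,M(s,t)),N(M(s,t),t)\big)$, for all $s,t>0$. A mean has a symmetric asymptotic expansion with coefficients $(a_n)$ if for every fixed real $t$ and $N\ge0$, $M(x-t,x+t)=\sum_{n=0}^Na_nt^{2n}x^{-2n+1}+o(x^{-2N+1})$ as $x\to\infty$. *)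

From Stdlib Require Import Reals Lra.
Open Scope R_scope.

(* A bivariate mean is represented by a total function M : R -> R -> R;
   only its values on (0,oo)^2 are constrained. *)
Definition is_mean (M : R -> R -> R) : Prop :=
  forall s t, 0 < s -> 0 < t -> 0 < M s t /\ Rmin s t <= M s t <= Rmax s t.

Definition symmetric_mean (M : R -> R -> R) : Prop :=
  forall s t, 0 < s -> 0 < t -> M s t = M t s.

Definition homogeneous_mean (M : R -> R -> R) : Prop :=
  forall l s t, 0 < l -> 0 < s -> 0 < t -> M (l * s) (l * t) = l * M s t.

Definition stable_mean (M : R -> R -> R) : Prop :=
  forall s t, 0 < s -> 0 < t -> M s t = M (M s (M s t)) (M (M s t) t).

Definition stabilizable (K N M : R -> R -> R) : Prop :=
  forall s t, 0 < s -> 0 < t -> M s t = K (M s (N s t)) (M (N s t) t).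

Definition stabilized (K N M : R -> R -> R) : Prop :=
  forall s t, 0 < s -> 0 < t -> M s t = K (N s (M s t)) (N (M s t) t).

Definition xpow (x : R) (n : nat) : R := x / x ^ (2 * n).

Definition sym_asymp_expansion (M : R -> R -> R) (a : nat -> R) : Prop :=
  forall (t : R) (Nn : nat) (eps : R), 0 < eps ->
    exists X : R, forall x : R, X < x ->
      Rabs (M (x - t) (x + t)
            - sum_f_R0 (fun n => a n * t ^ (2 * n) * xpow x n) Nn)
        <= eps * Rabs (xpow x Nn).

(* A homogeneous mean X is determined by its profile G(v) = X(1-v, 1+v) through
   X(a,b) = (a+b)/2 * G((b-a)/(a+b))  (pmean), and the symmetric asymptotic
   expansion of X with coefficients (a_i) is exactly the even expansion
   G(v) = sum_(i<=n) a_i v^(2i) + o(v^(2n)) of its profile at 0.  At the point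
   (1-u, 1+u), stability of K and N and the two equations on M all take the form
   Gw = comp Go Gi G0, where comp Go Gi G0 u is the Go-mean of the Gi-means of
   (1-u, G0 u) and (G0 u, 1+u).

   The core is a first-variation formula (comp_perturb): perturbing Go, Gi, G0 by
   co, ci, c0 times v^(2n) perturbs comp by (c0/2 + (ci+co)/4^n) u^(2n) + o(u^(2n)).
   Comparing two instances of the functional equation gives linear relations
   between coefficients (comp_coefficient):
   - both equations on M compared with the arithmetic mean give aK1 = aN1 = aM1;
   - two stable means with the same a_1: at order n >= 2 the discrepancy c
     satisfies c = c/2 + 2c/4^n, hence aK = aN;
   - M stabilized compared with K itself: c = c/2, hence aM = aK.
   Finally the stability of K is compared at order 4 with its quartic truncation,
   whose comp is computed with polynomial certificates; this gives
   a_2 = a_1 (1 + a_1)(1 - 4 a_1)/6. *)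

From Stdlib Require Import Reals Lra Lia List.
Import ListNotations.
Open Scope R_scope.

Definition near0 (P : R -> Prop) : Prop :=
  exists d, 0 < d /\ forall u, 0 < u < d -> P u.

Lemma near0_and (P Q : R -> Prop) :
  near0 P -> near0 Q -> near0 (fun u => P u /\ Q u).
Proof.
  intros [d1 [Hd1 H1]] [d2 [Hd2 H2]].
  exists (Rmin d1 d2); split; [apply Rmin_pos; lra|].
  intros u Hu; pose proof (Rmin_l d1 d2); pose proof (Rmin_r d1 d2).
  split; [apply H1 | apply H2]; lra.
Qed.

Lemma near0_mono (P Q : R -> Prop) :
  (forall u, 0 < u -> P u -> Q u) -> near0 P -> near0 Q.
Proof. intros H [d [Hd HP]]; exists d; split; [lra|]; intros u Hu; apply H; [lra | auto]. Qed.

Lemma near0_all (P : R -> Prop) : (forall u, 0 < u -> P u) -> near0 P.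
Proof. intros H; exists 1; split; [lra|]; intros u Hu; apply H; lra. Qed.

Lemma near0_below (c : R) : 0 < c -> near0 (fun u => u < c).
Proof. intros Hc; exists c; split; [lra|]; intros u Hu; lra. Qed.

Definition Lo (k : nat) (f : R -> R) : Prop :=
  forall eps, 0 < eps -> near0 (fun u => Rabs (f u) <= eps * u ^ k).

Definition BO (k : nat) (f : R -> R) : Prop :=
  exists C, near0 (fun u => Rabs (f u) <= C * u ^ k).

Lemma Lo_ext k (f g : R -> R) : near0 (fun u => f u = g u) -> Lo k f -> Lo k g.
Proof.
  intros E H eps He.
  apply (near0_mono (fun u => f u = g u /\ Rabs (f u) <= eps * u ^ k)).
  - intros u _ [-> Hf]; exact Hf.
  - apply near0_and; [exact E | exact (H eps He)].
Qed.

Lemma BO_ext k (f g : R -> R) : near0 (fun u => f u = g u) -> BO k f -> BO k g.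
Proof.
  intros E [C H]; exists C.
  apply (near0_mono (fun u => f u = g u /\ Rabs (f u) <= C * u ^ k)).
  - intros u _ [-> Hf]; exact Hf.
  - apply near0_and; assumption.
Qed.

Lemma near0_eq (f g : R -> R) : (forall u, f u = g u) -> near0 (fun u => f u = g u).
Proof. intros H; apply near0_all; intros u _; apply H. Qed.

Lemma Lo_plus k (f g : R -> R) : Lo k f -> Lo k g -> Lo k (fun u => f u + g u).
Proof.
  intros Hf Hg eps He.
  apply (near0_mono (fun u => Rabs (f u) <= eps / 2 * u ^ k /\ Rabs (g u) <= eps / 2 * u ^ k)).
  - intros u _ [H1 H2]; eapply Rle_trans; [apply Rabs_triang | lra].
  - apply near0_and; [apply Hf | apply Hg]; lra.
Qed.

Lemma BO_plus k (f g : R -> R) : BO k f -> BO k g -> BO k (fun u => f u + g u).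
Proof.
  intros [C1 H1] [C2 H2]; exists (C1 + C2).
  apply (near0_mono (fun u => Rabs (f u) <= C1 * u ^ k /\ Rabs (g u) <= C2 * u ^ k)).
  - intros u _ [F G]; eapply Rle_trans; [apply Rabs_triang | lra].
  - apply near0_and; assumption.
Qed.

Lemma BO_mul j k (f g : R -> R) : BO j f -> BO k g -> BO (j + k) (fun u => f u * g u).
Proof.
  intros [C1 H1] [C2 H2]; exists (C1 * C2).
  apply (near0_mono (fun u => Rabs (f u) <= C1 * u ^ j /\ Rabs (g u) <= C2 * u ^ k)).
  - intros u _ [F G]; rewrite Rabs_mult, pow_add.
    replace (C1 * C2 * (u ^ j * u ^ k)) with ((C1 * u ^ j) * (C2 * u ^ k)) by ring.
    apply Rmult_le_compat; auto using Rabs_pos.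
  - apply near0_and; assumption.
Qed.

Lemma BO_Lo_mul j k (f g : R -> R) : BO j f -> Lo k g -> Lo (j + k) (fun u => f u * g u).
Proof.
  intros [C HC] Hg eps He.
  assert (HC1 : 0 < Rabs C + 1) by (pose proof (Rabs_pos C); lra).
  apply (near0_mono (fun u => Rabs (f u) <= C * u ^ j /\
                                Rabs (g u) <= eps / (Rabs C + 1) * u ^ k)).
  - intros u Hu [F G]; rewrite Rabs_mult, pow_add.
    assert (Hj : 0 <= u ^ j) by (apply pow_le; lra).
    assert (F' : Rabs (f u) <= (Rabs C + 1) * u ^ j) by (pose proof (Rle_abs C); nra).
    apply Rle_trans with (((Rabs C + 1) * u ^ j) * (eps / (Rabs C + 1) * u ^ k)).
    + apply Rmult_le_compat; auto using Rabs_pos.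
    + right; field; lra.
  - apply near0_and; [exact HC | apply Hg, Rdiv_lt_0_compat; lra].
Qed.

Lemma Lo_BO_mul j k (f g : R -> R) : Lo j f -> BO k g -> Lo (j + k) (fun u => f u * g u).
Proof.
  intros Hf Hg; rewrite Nat.add_comm.
  apply Lo_ext with (fun u => g u * f u); [apply near0_eq; intros; ring|].
  apply BO_Lo_mul; assumption.
Qed.

Lemma Lo_mul_bounded k (f g : R -> R) : Lo k f -> BO 0 g -> Lo k (fun u => f u * g u).
Proof. intros Hf Hg; pose proof (Lo_BO_mul k 0 f g Hf Hg) as H; rewrite Nat.add_0_r in H; exact H. Qed.

Lemma BO_mul_bounded k (f g : R -> R) : BO k f -> BO 0 g -> BO k (fun u => f u * g u).
Proof. intros Hf Hg; pose proof (BO_mul k 0 f g Hf Hg) as H; rewrite Nat.add_0_r in H; exact H. Qed.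

Lemma BO_const c : BO 0 (fun _ => c).
Proof. exists (Rabs c); apply near0_all; intros u _; simpl; lra. Qed.

Lemma BO_upow k : BO k (fun u => u ^ k).
Proof.
  exists 1; apply near0_all; intros u Hu.
  rewrite Rabs_right by (apply Rle_ge, pow_le; lra); lra.
Qed.

Lemma BO_id : BO 1 (fun u => u).
Proof.
  apply BO_ext with (fun u => u ^ 1); [apply near0_eq; intros; ring | apply BO_upow].
Qed.

Lemma BO_scal k c (f : R -> R) : BO k f -> BO k (fun u => c * f u).
Proof. intros H; exact (BO_mul 0 k _ _ (BO_const c) H). Qed.

Lemma Lo_scal k c (f : R -> R) : Lo k f -> Lo k (fun u => c * f u).
Proof. intros H; exact (BO_Lo_mul 0 k _ _ (BO_const c) H). Qed.

Lemma Lo_minus k (f g : R -> R) : Lo k f -> Lo k g -> Lo k (fun u => f u - g u).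
Proof.
  intros Hf Hg; apply Lo_ext with (fun u => f u + -1 * g u); [apply near0_eq; intros; ring|].
  apply Lo_plus; [exact Hf | apply Lo_scal, Hg].
Qed.

Lemma BO_minus k (f g : R -> R) : BO k f -> BO k g -> BO k (fun u => f u - g u).
Proof.
  intros Hf Hg; apply BO_ext with (fun u => f u + -1 * g u); [apply near0_eq; intros; ring|].
  apply BO_plus; [exact Hf | apply BO_scal, Hg].
Qed.

Lemma Lo_zero k : Lo k (fun _ => 0).
Proof.
  intros eps He; apply near0_all; intros u Hu.
  rewrite Rabs_R0; apply Rmult_le_pos; [lra | apply pow_le; lra].
Qed.

Lemma Lo_BO k (f : R -> R) : Lo k f -> BO k f.
Proof. intros H; exists 1; apply H; lra. Qed.

Lemma BO_succ_Lo k (f : R -> R) : BO (S k) f -> Lo k f.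
Proof.
  intros [C HC] eps He.
  assert (HC1 : 0 < Rabs C + 1) by (pose proof (Rabs_pos C); lra).
  apply (near0_mono (fun u => Rabs (f u) <= C * u ^ S k /\ u < eps / (Rabs C + 1))).
  - intros u Hu [F Hsmall]; simpl in F.
    assert (Hk : 0 <= u ^ k) by (apply pow_le; lra).
    assert (Hue : u * (Rabs C + 1) < eps).
    { apply Rmult_lt_reg_r with (/ (Rabs C + 1)); [apply Rinv_0_lt_compat; lra|].
      rewrite Rmult_assoc, Rinv_r by lra; lra. }
    assert (HCu : C * u <= eps) by (pose proof (Rle_abs C); pose proof (Rabs_pos C); nra).
    apply Rle_trans with (1 := F); rewrite <- Rmult_assoc.
    apply Rmult_le_compat_r; assumption.
  - apply near0_and; [exact HC | apply near0_below, Rdiv_lt_0_compat; lra].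
Qed.

Lemma pow_le1 u n : 0 <= u <= 1 -> u ^ n <= 1.
Proof. intros H; induction n; simpl; nra. Qed.

Lemma BO_mono j k (f : R -> R) : (j <= k)%nat -> BO k f -> BO j f.
Proof.
  intros Hjk [C HC]; exists (Rabs C).
  apply (near0_mono (fun u => Rabs (f u) <= C * u ^ k /\ u < 1)).
  - intros u Hu [F H1].
    replace k with (j + (k - j))%nat in F by lia; rewrite pow_add in F.
    assert (0 <= u ^ j) by (apply pow_le; lra).
    assert (0 <= u ^ (k - j)) by (apply pow_le; lra).
    assert (u ^ (k - j) <= 1) by (apply pow_le1; lra).
    apply Rle_trans with (1 := F).
    apply Rle_trans with (Rabs C * (u ^ j * u ^ (k - j))).
    + apply Rmult_le_compat_r; [apply Rmult_le_pos; assumption | apply Rle_abs].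
    + apply Rmult_le_compat_l; [apply Rabs_pos | nra].
  - apply near0_and; [exact HC | apply near0_below; lra].
Qed.

Lemma BO_pow m (f : R -> R) : BO 1 f -> BO m (fun u => f u ^ m).
Proof.
  intros H; induction m as [|m IH].
  - apply BO_ext with (fun _ => 1); [apply near0_eq; intros; simpl; ring | apply BO_const].
  - apply BO_ext with (fun u => f u * f u ^ m); [apply near0_eq; intros; simpl; ring|].
    exact (BO_mul 1 m _ _ H IH).
Qed.

Lemma BO1_away (g : R -> R) c : 0 < c -> BO 1 (fun u => g u - c) -> near0 (fun u => c / 2 <= g u).
Proof.
  intros Hc H; apply (near0_mono (fun u => Rabs (g u - c) <= c / 2 * u ^ 0)).
  - intros u _ Hu; simpl in Hu.
    pose proof (Rle_abs (c - g u)) as Hcg; rewrite Rabs_minus_sym in Hcg; lra.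
  - apply BO_succ_Lo; [exact H | lra].
Qed.

Lemma BO_inv (g : R -> R) c : 0 < c -> BO 1 (fun u => g u - c) -> BO 0 (fun u => / g u).
Proof.
  intros Hc H; exists (2 / c).
  apply (near0_mono (fun u => c / 2 <= g u)); [|exact (BO1_away g c Hc H)].
  intros u _ Hg; simpl; rewrite Rmult_1_r, Rabs_inv, Rabs_right by lra.
  replace (2 / c) with (/ (c / 2)) by (field; lra).
  apply Rinv_le_contravar; lra.
Qed.

Lemma BO_div k (f g : R -> R) c : 0 < c -> BO 1 (fun u => g u - c) -> BO k f ->
  BO k (fun u => f u / g u).
Proof.
  intros Hc Hg Hf; exact (BO_mul_bounded k _ _ Hf (BO_inv g c Hc Hg)).
Qed.

Lemma BO_sub_lin (f : R -> R) c : BO 1 (fun u => f u - c) -> BO 0 f.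
Proof.
  intros H; apply BO_ext with (fun u => (f u - c) + c); [apply near0_eq; intros; ring|].
  apply BO_plus; [apply BO_mono with 1%nat; auto | apply BO_const].
Qed.

Lemma Lo_coef k kappa : Lo k (fun u => kappa * u ^ k) -> kappa = 0.
Proof.
  intros H; destruct (Req_dec kappa 0) as [|Hn]; [assumption | exfalso].
  pose proof (Rabs_pos_lt kappa Hn) as Hk.
  destruct (H (Rabs kappa / 2)) as [d [Hd F]]; [lra|].
  specialize (F (d / 2) ltac:(lra)); rewrite Rabs_mult in F.
  assert (0 < (d / 2) ^ k) by (apply pow_lt; lra).
  rewrite (Rabs_right ((d / 2) ^ k)) in F by lra; nra.
Qed.

Lemma Lo_sum k n (f : nat -> R -> R) : (forall i, (i <= n)%nat -> Lo k (f i)) ->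
  Lo k (fun u => sum_f_R0 (fun i => f i u) n).
Proof.
  induction n as [|n IH]; intros H; simpl.
  - apply H; lia.
  - apply Lo_plus; [apply IH; intros; apply H | apply H]; lia.
Qed.

Definition nearv (P : R -> Prop) : Prop :=
  exists d, 0 < d /\ forall v, Rabs v < d -> P v.

Lemma nearv_and (P Q : R -> Prop) :
  nearv P -> nearv Q -> nearv (fun v => P v /\ Q v).
Proof.
  intros [d1 [Hd1 H1]] [d2 [Hd2 H2]].
  exists (Rmin d1 d2); split; [apply Rmin_pos; lra|].
  intros v Hv; pose proof (Rmin_l d1 d2); pose proof (Rmin_r d1 d2).
  split; [apply H1 | apply H2]; lra.
Qed.

Lemma nearv_mono (P Q : R -> Prop) : (forall v, P v -> Q v) -> nearv P -> nearv Q.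
Proof. intros H [d [Hd HP]]; exists d; split; [lra|]; intros v Hv; apply H, HP, Hv. Qed.

Definition Lv (k : nat) (F : R -> R) : Prop :=
  forall eps, 0 < eps -> nearv (fun v => Rabs (F v) <= eps * Rabs v ^ k).

Definition Bv (k : nat) (F : R -> R) : Prop :=
  exists C, nearv (fun v => Rabs (F v) <= C * Rabs v ^ k).

Lemma Lv_ext k (F G : R -> R) : (forall v, F v = G v) -> Lv k F -> Lv k G.
Proof.
  intros E H eps He; generalize (H eps He); apply nearv_mono.
  intros v Hv; rewrite <- E; exact Hv.
Qed.

Lemma Bv_ext k (F G : R -> R) : (forall v, F v = G v) -> Bv k F -> Bv k G.
Proof.
  intros E [C H]; exists C; revert H; apply nearv_mono.
  intros v Hv; rewrite <- E; exact Hv.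
Qed.

Lemma Lv_minus k (F G : R -> R) : Lv k F -> Lv k G -> Lv k (fun v => F v - G v).
Proof.
  intros HF HG eps He.
  apply (nearv_mono (fun v => Rabs (F v) <= eps / 2 * Rabs v ^ k /\
                                Rabs (G v) <= eps / 2 * Rabs v ^ k)).
  - intros v [H1 H2]; unfold Rminus; eapply Rle_trans; [apply Rabs_triang|].
    rewrite Rabs_Ropp; lra.
  - apply nearv_and; [apply HF | apply HG]; lra.
Qed.

Lemma Lv_Bv k (F : R -> R) : Lv k F -> Bv k F.
Proof. intros H; exists 1; apply H; lra. Qed.

Lemma Bv_plus k (F G : R -> R) : Bv k F -> Bv k G -> Bv k (fun v => F v + G v).
Proof.
  intros [C1 H1] [C2 H2]; exists (C1 + C2).
  apply (nearv_mono (fun v => Rabs (F v) <= C1 * Rabs v ^ k /\ Rabs (G v) <= C2 * Rabs v ^ k)).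
  - intros v [A B]; eapply Rle_trans; [apply Rabs_triang | lra].
  - apply nearv_and; assumption.
Qed.

Lemma Bv_monomial k c : Bv k (fun v => c * v ^ k).
Proof.
  exists (Rabs c); exists 1; split; [lra|]; intros v _.
  rewrite Rabs_mult, <- RPow_abs; lra.
Qed.

Lemma BO1_bound (g : R -> R) : BO 1 g ->
  exists C, 1 <= C /\ near0 (fun u => Rabs (g u) <= C * u).
Proof.
  intros [C HC]; exists (Rabs C + 1); split; [pose proof (Rabs_pos C); lra|].
  revert HC; apply near0_mono; intros u Hu H; simpl in H; rewrite Rmult_1_r in H.
  pose proof (Rle_abs C); nra.
Qed.

Lemma Lv_comp k (F g : R -> R) : Lv k F -> BO 1 g -> Lo k (fun u => F (g u)).
Proof.
  intros HF Hg eps He; destruct (BO1_bound g Hg) as [C [HC1 HC]].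
  assert (HCk : 0 < C ^ k) by (apply pow_lt; lra).
  destruct (HF (eps / C ^ k)) as [d [Hd HFd]]; [apply Rdiv_lt_0_compat; lra|].
  apply (near0_mono (fun u => Rabs (g u) <= C * u /\ u < d / C)).
  - intros u Hu [Hgu Hud].
    assert (HCu : C * u < d).
    { apply Rmult_lt_reg_r with (/ C); [apply Rinv_0_lt_compat; lra|].
      replace (C * u * / C) with u by (field; lra); exact Hud. }
    apply Rle_trans with (1 := HFd (g u) ltac:(lra)).
    assert (Hpow : Rabs (g u) ^ k <= (C * u) ^ k) by (apply pow_incr; split; [apply Rabs_pos | exact Hgu]).
    rewrite Rpow_mult_distr in Hpow.
    apply Rle_trans with (eps / C ^ k * (C ^ k * u ^ k)).
    + apply Rmult_le_compat_l; [apply Rlt_le, Rdiv_lt_0_compat; lra | exact Hpow].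
    + right; field; lra.
  - apply near0_and; [exact HC | apply near0_below, Rdiv_lt_0_compat; lra].
Qed.

Lemma Bv_comp k (F g : R -> R) : Bv k F -> BO 1 g -> BO k (fun u => F (g u)).
Proof.
  intros [C0 [d [Hd HF]]] Hg; destruct (BO1_bound g Hg) as [C [HC1 HC]].
  exists (Rabs C0 * C ^ k).
  apply (near0_mono (fun u => Rabs (g u) <= C * u /\ u < d / C)).
  - intros u Hu [Hgu Hud].
    assert (HCu : C * u < d).
    { apply Rmult_lt_reg_r with (/ C); [apply Rinv_0_lt_compat; lra|].
      replace (C * u * / C) with u by (field; lra); exact Hud. }
    apply Rle_trans with (1 := HF (g u) ltac:(lra)).
    assert (Hpow : Rabs (g u) ^ k <= (C * u) ^ k) by (apply pow_incr; split; [apply Rabs_pos | exact Hgu]).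
    rewrite Rpow_mult_distr in Hpow; pose proof (pow_le (Rabs (g u)) k (Rabs_pos _)).
    apply Rle_trans with (Rabs C0 * Rabs (g u) ^ k).
    + apply Rmult_le_compat_r; [assumption | apply Rle_abs].
    + rewrite Rmult_assoc; apply Rmult_le_compat_l; [apply Rabs_pos | exact Hpow].
  - apply near0_and; [exact HC | apply near0_below, Rdiv_lt_0_compat; lra].
Qed.

Lemma Lv_restrict k (F : R -> R) : Lv k F -> Lo k F.
Proof. intros H; exact (Lv_comp k F (fun u => u) H BO_id). Qed.

Lemma Bv_restrict k (F : R -> R) : Bv k F -> BO k F.
Proof. intros H; exact (Bv_comp k F (fun u => u) H BO_id). Qed.

Lemma pow_diff_bound x y B m : Rabs x <= B -> Rabs y <= B ->
  Rabs (x ^ S m - y ^ S m) <= INR (S m) * B ^ m * Rabs (x - y).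
Proof.
  intros Hx Hy; assert (HB : 0 <= B) by (pose proof (Rabs_pos x); lra).
  induction m as [|m IH].
  - simpl; rewrite !Rmult_1_r; lra.
  - replace (x ^ S (S m) - y ^ S (S m)) with (x * (x ^ S m - y ^ S m) + y ^ S m * (x - y))
      by (simpl; ring).
    eapply Rle_trans; [apply Rabs_triang|]; rewrite !Rabs_mult, <- RPow_abs.
    assert (Hyp : Rabs y ^ S m <= B ^ S m) by (apply pow_incr; split; [apply Rabs_pos | exact Hy]).
    pose proof (Rabs_pos (x - y)); pose proof (Rabs_pos (x ^ S m - y ^ S m)).
    apply Rle_trans with (B * (INR (S m) * B ^ m * Rabs (x - y)) + B ^ S m * Rabs (x - y)).
    + apply Rplus_le_compat; [apply Rmult_le_compat; auto using Rabs_pos|].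
      apply Rmult_le_compat_r; assumption.
    + rewrite (S_INR (S m)); simpl; right; ring.
Qed.

Lemma BO_powdiff j m (f g : R -> R) : BO 1 f -> BO 1 g -> BO j (fun u => f u - g u) ->
  BO (j + m) (fun u => f u ^ S m - g u ^ S m).
Proof.
  intros Hf Hg [C3 H3].
  destruct (BO1_bound f Hf) as [C1 [HC1 H1]]; destruct (BO1_bound g Hg) as [C2 [HC2 H2]].
  exists (INR (S m) * (C1 + C2) ^ m * Rabs C3).
  apply (near0_mono (fun u => Rabs (f u) <= C1 * u /\ Rabs (g u) <= C2 * u /\
                                Rabs (f u - g u) <= C3 * u ^ j)).
  - intros u Hu [F [G D]].
    pose proof (Rabs_pos (f u)); pose proof (Rabs_pos (g u)).
    eapply Rle_trans; [apply pow_diff_bound with (B := (C1 + C2) * u); nra|].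
    rewrite Rpow_mult_distr, pow_add.
    pose proof (pos_INR (S m)); pose proof (pow_le (C1 + C2) m ltac:(lra)).
    pose proof (pow_le u m ltac:(lra)); pose proof (pow_le u j ltac:(lra)).
    assert (D' : Rabs (f u - g u) <= Rabs C3 * u ^ j) by (pose proof (Rle_abs C3); nra).
    replace (INR (S m) * (C1 + C2) ^ m * Rabs C3 * (u ^ j * u ^ m)) with
      ((INR (S m) * ((C1 + C2) ^ m * u ^ m)) * (Rabs C3 * u ^ j)) by ring.
    apply Rmult_le_compat_l; [apply Rmult_le_pos; [|apply Rmult_le_pos]; assumption | exact D'].
  - repeat apply near0_and; assumption.
Qed.

Definition ratio (a b : R) : R := (b - a) / (a + b).

Definition pmean (G : R -> R) (a b : R) : R := (a + b) / 2 * G (ratio a b).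

Definition profile (X : R -> R -> R) (v : R) : R := X (1 - v) (1 + v).

Lemma pmean_profile (X : R -> R -> R) a b : homogeneous_mean X -> 0 < a -> 0 < b ->
  X a b = pmean (profile X) a b.
Proof.
  intros HX Ha Hb; unfold pmean, profile, ratio; set (c := (a + b) / 2).
  replace (1 - (b - a) / (a + b)) with (a / c) by (unfold c; field; lra).
  replace (1 + (b - a) / (a + b)) with (b / c) by (unfold c; field; lra).
  rewrite <- HX by (unfold c; try apply Rdiv_lt_0_compat; lra).
  f_equal; unfold c; field; lra.
Qed.

Lemma profile_at_0 (X : R -> R -> R) : is_mean X -> profile X 0 = 1.
Proof.
  intros H; unfold profile; replace (1 - 0) with 1 by ring; replace (1 + 0) with 1 by ring.
  destruct (H 1 1) as [_ [H1 H2]]; try lra.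
  rewrite Rmin_left in H1 by lra; rewrite Rmax_left in H2 by lra; lra.
Qed.

Definition Psum (al : nat -> R) (n : nat) (v : R) : R := sum_f_R0 (fun i => al i * v ^ (2 * i)) n.

Lemma Psum_at_0 al n : Psum al n 0 = al 0%nat.
Proof.
  unfold Psum; induction n as [|n IH]; [simpl; ring|].
  rewrite tech5, IH; replace (2 * S n)%nat with (S (2 * n + 1)) by lia; simpl; ring.
Qed.

Lemma Psum_diff (al bl : nat -> R) n v : (forall i, (i < n)%nat -> al i = bl i) ->
  Psum al n v - Psum bl n v = (al n - bl n) * v ^ (2 * n).
Proof.
  intros H; unfold Psum; destruct n as [|n]; [simpl; ring|].
  rewrite !tech5, (sum_eq (fun i => al i * v ^ (2 * i)) (fun i => bl i * v ^ (2 * i)) n)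
    by (intros i Hi; rewrite H by lia; reflexivity).
  ring.
Qed.

Lemma expansion_a0 (X : R -> R -> R) al : is_mean X -> sym_asymp_expansion X al -> al 0%nat = 1.
Proof.
  intros Hm He; destruct (Req_dec (al 0%nat) 1) as [|Hn]; [assumption | exfalso].
  set (e := Rabs (1 - al 0%nat)).
  assert (He0 : 0 < e) by (apply Rabs_pos_lt; intro; apply Hn; lra).
  destruct (He 1 0%nat (e / 2) ltac:(lra)) as [X0 HX].
  set (x := Rmax (X0 + 1) (4 / e + 2)).
  assert (Hx1 : X0 < x) by (unfold x; pose proof (Rmax_l (X0 + 1) (4 / e + 2)); lra).
  assert (Hx2 : 4 / e + 2 <= x) by apply Rmax_r.
  assert (0 < 4 / e) by (apply Rdiv_lt_0_compat; lra).
  specialize (HX x Hx1).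
  assert (Ex : xpow x 0 = x) by (unfold xpow; simpl; field).
  simpl sum_f_R0 in HX; rewrite Ex in HX; simpl in HX.
  rewrite Rmult_1_r, (Rabs_right x) in HX by lra.
  destruct (Hm (x - 1) (x + 1)) as [_ [H1 H2]]; try lra.
  rewrite Rmin_left in H1 by lra; rewrite Rmax_right in H2 by lra.
  assert (Hxe : e * x >= 4 + 2 * e).
  { apply Rle_ge; replace (4 + 2 * e) with (e * (4 / e + 2)) by (field; lra).
    apply Rmult_le_compat_l; lra. }
  unfold e in *; unfold Rabs in *.
  destruct (Rcase_abs (1 - al 0%nat)); destruct (Rcase_abs (X (x - 1) (x + 1) - al 0%nat * x)); nra.
Qed.

Lemma expansion_rescaled (X : R -> R -> R) al n eps t w :
  homogeneous_mean X -> t * t = 1 -> 0 < w -> w < 1 ->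
  Rabs (X (/ w - t) (/ w + t) - sum_f_R0 (fun i => al i * t ^ (2 * i) * xpow (/ w) i) n)
    <= eps * Rabs (xpow (/ w) n) ->
  Rabs (profile X (t * w) - Psum al n (t * w)) <= eps * w ^ (2 * n).
Proof.
  intros Hh Htt Hw Hw1 H.
  assert (Ht : forall i, t ^ (2 * i) = 1) by (intros i; rewrite pow_mult; simpl; rewrite Rmult_1_r, Htt; apply pow1).
  assert (Ht' : t = 1 \/ t = -1) by (destruct (Rle_dec 0 t); [left | right]; nra).
  assert (Hxpow : forall i, xpow (/ w) i = / w * w ^ (2 * i)).
  { intros i; unfold xpow; rewrite pow_inv; field; split; [lra | apply pow_nonzero; lra]. }
  assert (E1 : X (/ w - t) (/ w + t) = / w * profile X (t * w)).
  { unfold profile; rewrite <- Hh by (try apply Rinv_0_lt_compat; destruct Ht'; subst; lra).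
    f_equal; field; lra. }
  assert (E2 : forall m, sum_f_R0 (fun i => al i * t ^ (2 * i) * xpow (/ w) i) m =
                         / w * Psum al m (t * w)).
  { unfold Psum; intros m; induction m as [|m IH].
    - unfold sum_f_R0; rewrite Hxpow; simpl; ring.
    - rewrite !tech5, IH, Hxpow, Rpow_mult_distr, !Ht; ring. }
  rewrite E1, E2, Hxpow, <- Rmult_minus_distr_l, !Rabs_mult in H.
  assert (Hiw : 0 < / w) by (apply Rinv_0_lt_compat; lra).
  rewrite (Rabs_right (/ w)), (Rabs_right (w ^ (2 * n))) in H by (apply Rle_ge; try apply pow_le; lra).
  apply Rmult_le_reg_l with (/ w); [exact Hiw | nra].
Qed.

Lemma profile_expansion (X : R -> R -> R) al n :
  is_mean X -> homogeneous_mean X -> sym_asymp_expansion X al ->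
  Lv (2 * n) (fun v => profile X v - Psum al n v).
Proof.
  intros Hm Hh He eps Heps.
  destruct (He 1 n eps Heps) as [X1 HX1]; destruct (He (-1) n eps Heps) as [X2 HX2].
  set (B := Rabs X1 + Rabs X2 + 1).
  assert (HB : 0 < B) by (unfold B; pose proof (Rabs_pos X1); pose proof (Rabs_pos X2); lra).
  exists (Rmin 1 (/ B)); split; [apply Rmin_pos; [lra | apply Rinv_0_lt_compat; lra]|].
  intros v Hv; pose proof (Rmin_l 1 (/ B)); pose proof (Rmin_r 1 (/ B)).
  destruct (Req_dec v 0) as [->|Hv0].
  - rewrite profile_at_0, Psum_at_0, (expansion_a0 X al) by assumption.
    rewrite Rminus_diag, Rabs_R0; apply Rmult_le_pos; [lra | apply pow_le; lra].
  - set (w := Rabs v); assert (Hw : 0 < w) by (apply Rabs_pos_lt; exact Hv0).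
    assert (HBw : B < / w).
    { rewrite <- (Rinv_inv B); apply Rinv_lt_contravar; [|unfold w; lra].
      apply Rmult_lt_0_compat; [exact Hw | apply Rinv_0_lt_compat, HB]. }
    pose proof (Rle_abs X1); pose proof (Rle_abs X2); pose proof (Rabs_pos X1); pose proof (Rabs_pos X2).
    destruct (Rlt_dec 0 v).
    + replace v with (1 * w) by (unfold w; rewrite Rabs_right; lra).
      apply expansion_rescaled; [exact Hh | lra | lra | unfold w; lra | apply HX1; unfold B in HBw; lra].
    + replace v with (-1 * w) by (unfold w; rewrite Rabs_left; lra).
      apply expansion_rescaled; [exact Hh | lra | lra | unfold w; lra | apply HX2; unfold B in HBw; lra].
Qed.

Definition near_one (G : R -> R) : Prop := Bv 2 (fun v => G v - 1).

Definition regular (n : nat) (G : R -> R) : Prop :=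
  near_one G /\ exists al, Lv (2 * n) (fun v => G v - Psum al n v).

Definition differ_by (n : nat) (c : R) (G G' : R -> R) : Prop :=
  Lv (2 * n) (fun v => G v - G' v - c * v ^ (2 * n)).

Lemma Lv_null k (F : R -> R) : (forall v, F v = 0) -> Lv k F.
Proof.
  intros H eps He; exists 1; split; [lra|]; intros v _.
  rewrite H, Rabs_R0; apply Rmult_le_pos; [lra | apply pow_le, Rabs_pos].
Qed.

Lemma expansions_differ (G G' : R -> R) (al bl : nat -> R) n :
  Lv (2 * n) (fun v => G v - Psum al n v) -> Lv (2 * n) (fun v => G' v - Psum bl n v) ->
  (forall i, (i < n)%nat -> al i = bl i) -> differ_by n (al n - bl n) G G'.
Proof.
  intros HG HG' Hlow; unfold differ_by.
  apply Lv_ext with (fun v => (G v - Psum al n v) - (G' v - Psum bl n v)).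
  - intros v; pose proof (Psum_diff al bl n v Hlow); lra.
  - apply Lv_minus; assumption.
Qed.

Lemma mean_regular (X : R -> R -> R) al n :
  is_mean X -> homogeneous_mean X -> sym_asymp_expansion X al -> regular n (profile X).
Proof.
  intros Hm Hh He; split; [|exists al; apply profile_expansion; assumption].
  apply Bv_ext with (fun v => (profile X v - Psum al 1 v) + al 1%nat * v ^ 2).
  - intros v; unfold Psum; simpl; rewrite (expansion_a0 X al Hm He); ring.
  - apply Bv_plus; [apply Lv_Bv, (profile_expansion X al 1 Hm Hh He) | apply Bv_monomial].
Qed.

Definition Near (alpha : R) (f : R -> R) : Prop := BO 2 (fun u => f u - (1 + alpha * u)).

Lemma BO2_linear_BO1 (f : R -> R) alpha : BO 2 (fun u => f u - alpha * u) -> BO 1 f.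
Proof.
  intros H; apply BO_ext with (fun u => (f u - alpha * u) + alpha * u); [apply near0_eq; intros; ring|].
  apply BO_plus; [apply BO_mono with 2%nat; auto | apply BO_scal, BO_id].
Qed.

Lemma Near_BO1 alpha (f : R -> R) : Near alpha f -> BO 1 (fun u => f u - 1).
Proof.
  intros H; apply (BO2_linear_BO1 _ alpha).
  apply BO_ext with (fun u => f u - (1 + alpha * u)); [apply near0_eq; intros; ring | exact H].
Qed.

Lemma Near_id_minus : Near (-1) (fun u => 1 - u).
Proof. apply BO_ext with (fun u => 0 * u ^ 2); [apply near0_eq; intros; ring | apply BO_scal, BO_upow]. Qed.

Lemma Near_id_plus : Near 1 (fun u => 1 + u).
Proof. apply BO_ext with (fun u => 0 * u ^ 2); [apply near0_eq; intros; ring | apply BO_scal, BO_upow]. Qed.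

Lemma near_one_Near (G : R -> R) : near_one G -> Near 0 G.
Proof.
  intros H; apply BO_ext with (fun u => G u - 1); [apply near0_eq; intros; ring|].
  apply Bv_restrict, H.
Qed.

Lemma sum_near_2 alpha beta (a b : R -> R) : Near alpha a -> Near beta b ->
  BO 1 (fun u => (a u + b u) - 2).
Proof.
  intros Ha Hb; apply BO_ext with (fun u => (a u - 1) + (b u - 1)); [apply near0_eq; intros; ring|].
  apply BO_plus; [apply (Near_BO1 alpha) | apply (Near_BO1 beta)]; assumption.
Qed.

Lemma Near_ratio alpha beta (a b : R -> R) : Near alpha a -> Near beta b ->
  BO 2 (fun u => ratio (a u) (b u) - (beta - alpha) / 2 * u).
Proof.
  intros Ha Hb; pose proof (sum_near_2 _ _ _ _ Ha Hb) as Hs.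
  apply BO_ext with (fun u => ((b u - (1 + beta * u)) - (a u - (1 + alpha * u))
                               - (beta - alpha) / 2 * (u * ((a u + b u) - 2))) / (a u + b u)).
  - apply (near0_mono (fun u => 2 / 2 <= a u + b u)); [|exact (BO1_away _ 2 ltac:(lra) Hs)].
    intros u _ Hu; unfold ratio; field; lra.
  - apply BO_div with 2; [lra | exact Hs|].
    apply BO_minus; [apply BO_minus; assumption|].
    apply BO_scal; exact (BO_mul 1 1 _ _ BO_id Hs).
Qed.

Lemma Near_pmean (G : R -> R) alpha beta (a b : R -> R) :
  near_one G -> Near alpha a -> Near beta b -> Near ((alpha + beta) / 2) (fun u => pmean G (a u) (b u)).
Proof.
  intros HG Ha Hb; pose proof (sum_near_2 _ _ _ _ Ha Hb) as Hs.
  unfold Near, pmean.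
  apply BO_ext with (fun u => (a u + b u) / 2 * (G (ratio (a u) (b u)) - 1)
                               + / 2 * ((a u - (1 + alpha * u)) + (b u - (1 + beta * u)))).
  { apply near0_eq; intros; field. }
  apply BO_plus; [|apply BO_scal, BO_plus; assumption].
  apply (BO_mul 0 2).
  - apply (BO_sub_lin _ 1).
    apply BO_ext with (fun u => / 2 * ((a u + b u) - 2)); [apply near0_eq; intros; field | apply BO_scal, Hs].
  - apply (Bv_comp 2 (fun v => G v - 1)); [exact HG|].
    exact (BO2_linear_BO1 _ _ (Near_ratio _ _ _ _ Ha Hb)).
Qed.

Lemma ratio_perturb n (a1 b1 a2 b2 : R -> R) : (1 <= n)%nat ->
  BO (2 * n) (fun u => a1 u - a2 u) -> BO (2 * n) (fun u => b1 u - b2 u) ->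
  BO 1 (fun u => a2 u - 1) -> BO 1 (fun u => b2 u - 1) ->
  BO (2 * n) (fun u => ratio (a1 u) (b1 u) - ratio (a2 u) (b2 u)).
Proof.
  intros Hn Ha Hb Ha2 Hb2.
  assert (Hlow : forall f g : R -> R, BO (2 * n) (fun u => f u - g u) -> BO 1 (fun u => g u - 1) ->
                  BO 1 (fun u => f u - 1)).
  { intros f g Hfg Hg; apply BO_ext with (fun u => (f u - g u) + (g u - 1)); [apply near0_eq; intros; ring|].
    apply BO_plus; [apply BO_mono with (2 * n)%nat; [lia|]|]; assumption. }
  assert (Hsum : forall a b : R -> R, BO 1 (fun u => a u - 1) -> BO 1 (fun u => b u - 1) ->
                  BO 1 (fun u => (a u + b u) - 2)).
  { intros a b HA HB; apply BO_ext with (fun u => (a u - 1) + (b u - 1)); [apply near0_eq; intros; ring|].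
    apply BO_plus; assumption. }
  pose proof (Hsum _ _ (Hlow _ _ Ha Ha2) (Hlow _ _ Hb Hb2)) as Hs1.
  pose proof (Hsum _ _ Ha2 Hb2) as Hs2.
  apply BO_ext with (fun u => (2 * ((b1 u - b2 u) * a2 u - (a1 u - a2 u) * b2 u)) /
                              ((a1 u + b1 u) * (a2 u + b2 u))).
  - apply (near0_mono (fun u => 2 / 2 <= a1 u + b1 u /\ 2 / 2 <= a2 u + b2 u)).
    + intros u _ [H1 H2]; unfold ratio; field; lra.
    + apply near0_and; apply BO1_away; [lra | exact Hs1 | lra | exact Hs2].
  - apply BO_div with 4; [lra| |].
    + apply BO_ext with (fun u => ((a1 u + b1 u) - 2) * (a2 u + b2 u) + 2 * ((a2 u + b2 u) - 2));
        [apply near0_eq; intros; ring|].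
      apply BO_plus; [|apply BO_scal, Hs2].
      apply (BO_mul 1 0); [exact Hs1 | apply (BO_sub_lin _ 2), Hs2].
    + apply BO_scal, BO_minus;
        apply BO_mul_bounded; [exact Hb | apply (BO_sub_lin _ 1), Ha2 | exact Ha | apply (BO_sub_lin _ 1), Hb2].
Qed.

Lemma profile_increment n (G : R -> R) al (v1 v2 : R -> R) : (1 <= n)%nat ->
  Lv (2 * n) (fun v => G v - Psum al n v) -> BO 1 v1 -> BO 1 v2 ->
  BO (2 * n) (fun u => v1 u - v2 u) -> Lo (2 * n) (fun u => G (v1 u) - G (v2 u)).
Proof.
  intros Hn HG H1 H2 H12.
  apply Lo_ext with (fun u => (G (v1 u) - Psum al n (v1 u)) - (G (v2 u) - Psum al n (v2 u))
                              + sum_f_R0 (fun i => al i * (v1 u ^ (2 * i) - v2 u ^ (2 * i))) n).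
  { apply near0_eq; intros u; unfold Psum.
    assert (Hs : forall m, sum_f_R0 (fun i => al i * (v1 u ^ (2 * i) - v2 u ^ (2 * i))) m =
       sum_f_R0 (fun i => al i * v1 u ^ (2 * i)) m - sum_f_R0 (fun i => al i * v2 u ^ (2 * i)) m).
    { induction m as [|m IH]; [simpl; ring | rewrite !tech5, IH; ring]. }
    rewrite Hs; ring. }
  apply Lo_plus; [apply Lo_minus; apply (Lv_comp _ (fun v => G v - Psum al n v)); assumption|].
  apply Lo_sum; intros [|i] Hi.
  - apply Lo_ext with (fun _ => 0); [apply near0_eq; intros; simpl; ring | apply Lo_zero].
  - apply Lo_scal, BO_succ_Lo.
    replace (2 * S i)%nat with (S (2 * i + 1)) by lia.
    apply BO_mono with (2 * n + (2 * i + 1))%nat; [lia | apply BO_powdiff; assumption].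
Qed.

Lemma Lo_monomial_BO k (f : R -> R) d : Lo k (fun u => f u - d * u ^ k) -> BO k f.
Proof.
  intros H; apply BO_ext with (fun u => (f u - d * u ^ k) + d * u ^ k); [apply near0_eq; intros; ring|].
  apply BO_plus; [apply Lo_BO, H | apply BO_scal, BO_upow].
Qed.

Lemma pmean_perturb n (G1 G2 : R -> R) c da db alpha beta (a1 b1 a2 b2 : R -> R) :
  (1 <= n)%nat -> regular n G1 -> differ_by n c G1 G2 ->
  Lo (2 * n) (fun u => a1 u - a2 u - da * u ^ (2 * n)) ->
  Lo (2 * n) (fun u => b1 u - b2 u - db * u ^ (2 * n)) ->
  Near alpha a2 -> Near beta b2 ->
  Lo (2 * n) (fun u => pmean G1 (a1 u) (b1 u) - pmean G2 (a2 u) (b2 u)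
                       - ((da + db) / 2 + c * ((beta - alpha) / 2) ^ (2 * n)) * u ^ (2 * n)).
Proof.
  intros Hn [HG1 [al Hal]] H12 Ha Hb Ha2 Hb2; set (mu := (beta - alpha) / 2).
  set (v1 := fun u => ratio (a1 u) (b1 u)); set (v2 := fun u => ratio (a2 u) (b2 u)).
  set (c2 := fun u => (a2 u + b2 u) / 2).
  assert (Hmu : BO 2 (fun u => v2 u - mu * u)) by exact (Near_ratio _ _ _ _ Ha2 Hb2).
  assert (Hv2 : BO 1 v2) by exact (BO2_linear_BO1 _ _ Hmu).
  assert (Hv12 : BO (2 * n) (fun u => v1 u - v2 u)).
  { apply ratio_perturb; [exact Hn | apply (Lo_monomial_BO _ _ da), Ha | apply (Lo_monomial_BO _ _ db), Hb
                         | apply (Near_BO1 alpha), Ha2 | apply (Near_BO1 beta), Hb2]. }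
  assert (Hv1 : BO 1 v1).
  { apply BO_ext with (fun u => (v1 u - v2 u) + v2 u); [apply near0_eq; intros; ring|].
    apply BO_plus; [apply BO_mono with (2 * n)%nat; [lia|]|]; assumption. }
  assert (Hc21 : BO 1 (fun u => c2 u - 1)).
  { apply BO_ext with (fun u => / 2 * ((a2 u + b2 u) - 2)); [apply near0_eq; intros; unfold c2; field|].
    apply BO_scal, (sum_near_2 alpha beta); assumption. }
  assert (Hc2 : BO 0 c2) by exact (BO_sub_lin _ _ Hc21).
  assert (HGv1 : BO 1 (fun u => G1 (v1 u) - 1)).
  { apply BO_mono with 2%nat; [lia | apply (Bv_comp 2 (fun v => G1 v - 1)); assumption]. }
  apply Lo_ext with (fun u =>
       / 2 * ((a1 u - a2 u - da * u ^ (2 * n)) + (b1 u - b2 u - db * u ^ (2 * n))) * G1 (v1 u)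
     + (da + db) / 2 * (u ^ (2 * n) * (G1 (v1 u) - 1))
     + c2 u * (G1 (v1 u) - G1 (v2 u))
     + c2 u * (G1 (v2 u) - G2 (v2 u) - c * v2 u ^ (2 * n))
     + c * ((c2 u - 1) * v2 u ^ (2 * n))
     + c * (v2 u ^ (2 * n) - (mu * u) ^ (2 * n))).
  { apply near0_eq; intros u; unfold pmean, c2; fold (v1 u) (v2 u); rewrite Rpow_mult_distr; field. }
  repeat apply Lo_plus.
  - apply Lo_mul_bounded; [apply Lo_scal, Lo_plus; assumption|].
    exact (BO_sub_lin _ _ HGv1).
  - apply Lo_scal, BO_succ_Lo; rewrite <- Nat.add_1_r; apply BO_mul; [apply BO_upow | exact HGv1].
  - apply (BO_Lo_mul 0); [exact Hc2 | apply (profile_increment n G1 al); assumption].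
  - apply (BO_Lo_mul 0); [exact Hc2 | apply (Lv_comp _ (fun v => G1 v - G2 v - c * v ^ (2 * n))); assumption].
  - apply Lo_scal, BO_succ_Lo; apply (BO_mul 1 (2 * n)); [exact Hc21 | apply BO_pow, Hv2].
  - apply Lo_scal, BO_succ_Lo.
    replace (2 * n)%nat with (S (2 * n - 1)) by lia.
    replace (S (S (2 * n - 1))) with (2 + (2 * n - 1))%nat by lia.
    apply BO_powdiff; [exact Hv2 | apply BO_scal, BO_id | exact Hmu].
Qed.

Lemma Lo_unique k (f g : R -> R) k1 k2 :
  Lo k (fun u => f u - k1 * u ^ k) -> Lo k (fun u => g u - k2 * u ^ k) ->
  near0 (fun u => f u = g u) -> k1 = k2.
Proof.
  intros H1 H2 E.
  enough (k2 - k1 = 0) by lra.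
  apply (Lo_coef k).
  apply Lo_ext with (fun u => (f u - k1 * u ^ k) - (g u - k2 * u ^ k)); [|apply Lo_minus; assumption].
  revert E; apply near0_mono; intros u _ ->; ring.
Qed.

(* The shape of all three functional equations at the point (1-u, 1+u):
   comp Go Gi G0 u = Go-mean of the Gi-means of (1-u, G0 u) and (G0 u, 1+u). *)
Definition comp (Go Gi G0 : R -> R) (u : R) : R :=
  pmean Go (pmean Gi (1 - u) (G0 u)) (pmean Gi (G0 u) (1 + u)).

Lemma half_pow_even n : (1 / 2) ^ (2 * n) = / 4 ^ n.
Proof. rewrite pow_mult, <- pow_inv; f_equal; field. Qed.

Lemma comp_perturb n (Go Gi G0 Go' Gi' G0' : R -> R) co ci c0 :
  (1 <= n)%nat -> regular n Go -> regular n Gi -> near_one Gi' -> near_one G0' ->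
  differ_by n co Go Go' -> differ_by n ci Gi Gi' -> differ_by n c0 G0 G0' ->
  Lo (2 * n) (fun u => comp Go Gi G0 u - comp Go' Gi' G0' u
                       - (c0 / 2 + (ci + co) / 4 ^ n) * u ^ (2 * n)).
Proof.
  intros Hn HGo HGi HGi' HG0' Do Di D0.
  pose proof (Lv_restrict _ _ D0) as H0.
  assert (Hfix : forall s : R -> R, Lo (2 * n) (fun u => s u - s u - 0 * u ^ (2 * n))).
  { intros s; apply Lo_ext with (fun _ => 0); [apply near0_eq; intros; ring | apply Lo_zero]. }
  pose proof (near_one_Near _ HG0') as N0.
  pose proof (pmean_perturb n Gi Gi' ci 0 c0 (-1) 0 _ _ _ _ Hn HGi Di (Hfix _) H0 Near_id_minus N0) as Hp.
  pose proof (pmean_perturb n Gi Gi' ci c0 0 0 1 _ _ _ _ Hn HGi Di H0 (Hfix _) N0 Near_id_plus) as Hq.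
  pose proof (pmean_perturb n Go Go' co _ _ _ _ _ _ _ _ Hn HGo Do Hp Hq
                (Near_pmean _ _ _ _ _ HGi' Near_id_minus N0)
                (Near_pmean _ _ _ _ _ HGi' N0 Near_id_plus)) as Hout.
  revert Hout; apply Lo_ext, near0_eq; intros u; unfold comp.
  replace ((0 - -1) / 2) with (1 / 2) by field; replace ((1 - 0) / 2) with (1 / 2) by field;
    replace (((0 + 1) / 2 - (-1 + 0) / 2) / 2) with (1 / 2) by field.
  rewrite half_pow_even; field; apply pow_nonzero; lra.
Qed.

Lemma comp_coefficient n (Gw Go Gi G0 Gw' Go' Gi' G0' : R -> R) cw co ci c0 :
  (1 <= n)%nat -> regular n Go -> regular n Gi -> near_one Gi' -> near_one G0' ->
  differ_by n cw Gw Gw' -> differ_by n co Go Go' -> differ_by n ci Gi Gi' -> differ_by n c0 G0 G0' ->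
  near0 (fun u => Gw u = comp Go Gi G0 u) -> near0 (fun u => Gw' u = comp Go' Gi' G0' u) ->
  cw = c0 / 2 + (ci + co) / 4 ^ n.
Proof.
  intros Hn HGo HGi HGi' HG0' Dw Do Di D0 Ew Ew'.
  apply (Lo_unique (2 * n) (fun u => Gw u - Gw' u) (fun u => comp Go Gi G0 u - comp Go' Gi' G0' u)).
  - exact (Lv_restrict _ _ Dw).
  - exact (comp_perturb n _ _ _ _ _ _ _ _ _ Hn HGo HGi HGi' HG0' Do Di D0).
  - apply (near0_mono (fun u => Gw u = comp Go Gi G0 u /\ Gw' u = comp Go' Gi' G0' u)).
    + intros u _ [-> ->]; reflexivity.
    + apply near0_and; assumption.
Qed.

Lemma profile_comp (W X Y Z : R -> R -> R) :
  homogeneous_mean X -> is_mean Y -> homogeneous_mean Y -> is_mean Z ->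
  (forall s t, 0 < s -> 0 < t -> W s t = X (Y s (Z s t)) (Y (Z s t) t)) ->
  near0 (fun u => profile W u = comp (profile X) (profile Y) (profile Z) u).
Proof.
  intros HhX HmY HhY HmZ E; apply (near0_mono (fun u => u < 1)); [|apply near0_below; lra].
  intros u Hu Hu1; assert (Hs : 0 < 1 - u) by lra; assert (Ht : 0 < 1 + u) by lra.
  pose proof (proj1 (HmZ _ _ Hs Ht)) as Hz; fold (profile Z u) in Hz.
  pose proof (proj1 (HmY _ _ Hs Hz)) as Hp; pose proof (proj1 (HmY _ _ Hz Ht)) as Hq.
  unfold comp; unfold profile at 1; rewrite E by assumption; fold (profile Z u).
  rewrite (pmean_profile X) by assumption.
  rewrite (pmean_profile Y _ _ HhY Hs Hz), (pmean_profile Y _ _ HhY Hz Ht); reflexivity.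
Qed.

Lemma differ_from_one (X : R -> R -> R) al :
  is_mean X -> homogeneous_mean X -> sym_asymp_expansion X al ->
  differ_by 1 (al 1%nat) (profile X) (fun _ => 1).
Proof.
  intros Hm Hh He; apply Lv_ext with (fun v => profile X v - Psum al 1 v).
  - intros v; unfold Psum; simpl; rewrite (expansion_a0 X al Hm He); ring.
  - apply profile_expansion; assumption.
Qed.

(* Order 2: comparing both equations with the arithmetic mean (profile 1). *)
Lemma first_coefficients (K N M : R -> R -> R) (aK aN aM : nat -> R) :
  is_mean K -> homogeneous_mean K -> sym_asymp_expansion K aK ->
  is_mean N -> homogeneous_mean N -> sym_asymp_expansion N aN ->
  is_mean M -> homogeneous_mean M -> sym_asymp_expansion M aM ->
  stabilizable K N M -> stabilized K N M ->
  aK 1%nat = aM 1%nat /\ aN 1%nat = aM 1%nat.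
Proof.
  intros HmK HhK HeK HmN HhN HeN HmM HhM HeM Hsz Hsd.
  set (one := fun _ : R => 1).
  assert (H1 : near_one one) by (apply Bv_ext with (fun v => 0 * v ^ 2); [intros; unfold one; ring | apply Bv_monomial]).
  assert (E1 : near0 (fun u => one u = comp one one one u))
    by (apply near0_eq; intros; unfold comp, pmean, one; field).
  assert (Hlt : (1 <= 1)%nat) by lia.
  pose proof (comp_coefficient 1 _ _ _ _ one one one one _ _ _ _ Hlt
    (mean_regular K aK 1 HmK HhK HeK) (mean_regular M aM 1 HmM HhM HeM) H1 H1
    (differ_from_one M aM HmM HhM HeM) (differ_from_one K aK HmK HhK HeK)
    (differ_from_one M aM HmM HhM HeM) (differ_from_one N aN HmN HhN HeN)
    (profile_comp M K M N HhK HmM HhM HmN Hsz) E1) as Hstabilizable.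
  pose proof (comp_coefficient 1 _ _ _ _ one one one one _ _ _ _ Hlt
    (mean_regular K aK 1 HmK HhK HeK) (mean_regular N aN 1 HmN HhN HeN) H1 H1
    (differ_from_one M aM HmM HhM HeM) (differ_from_one K aK HmK HhK HeK)
    (differ_from_one N aN HmN HhN HeN) (differ_from_one M aM HmM HhM HeM)
    (profile_comp M K N M HhK HmN HhN HmM Hsd) E1) as Hstabilized.
  simpl in Hstabilizable, Hstabilized; split; lra.
Qed.

Lemma mean_profiles_differ (X Y : R -> R -> R) (al bl : nat -> R) n :
  is_mean X -> homogeneous_mean X -> sym_asymp_expansion X al ->
  is_mean Y -> homogeneous_mean Y -> sym_asymp_expansion Y bl ->
  (forall i, (i < n)%nat -> al i = bl i) -> differ_by n (al n - bl n) (profile X) (profile Y).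
Proof.
  intros HmX HhX HeX HmY HhY HeY; apply expansions_differ; apply profile_expansion; assumption.
Qed.

(* Two stable means whose expansions share the coefficient a_1 have the same
   expansion: at order n >= 2 the discrepancy c satisfies c = c/2 + 2c/4^n. *)
Lemma stable_expansion_unique (K N : R -> R -> R) (aK aN : nat -> R) :
  is_mean K -> homogeneous_mean K -> stable_mean K -> sym_asymp_expansion K aK ->
  is_mean N -> homogeneous_mean N -> stable_mean N -> sym_asymp_expansion N aN ->
  aK 1%nat = aN 1%nat -> forall n, aK n = aN n.
Proof.
  intros HmK HhK HsK HeK HmN HhN HsN HeN H1 n.
  induction n as [n IH] using (well_founded_induction Wf_nat.lt_wf).
  destruct n as [|[|m]]; [rewrite (expansion_a0 K aK), (expansion_a0 N aN) by assumption; reflexivity | exact H1|].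
  set (n := S (S m)); assert (Hn : (1 <= n)%nat) by (unfold n; lia).
  pose proof (mean_profiles_differ K N aK aN n HmK HhK HeK HmN HhN HeN IH) as D.
  pose proof (comp_coefficient n _ _ _ _ _ _ _ _ _ _ _ _ Hn
    (mean_regular K aK n HmK HhK HeK) (mean_regular K aK n HmK HhK HeK)
    (proj1 (mean_regular N aN n HmN HhN HeN)) (proj1 (mean_regular N aN n HmN HhN HeN))
    D D D D (profile_comp K K K K HhK HmK HhK HmK HsK) (profile_comp N N N N HhN HmN HhN HmN HsN)) as Hc.
  assert (H16 : 16 <= 4 ^ n) by (unfold n; simpl; pose proof (pow_R1_Rle 4 m ltac:(lra)); lra).
  set (c := aK n - aN n) in Hc.
  assert (Hc' : c * (4 ^ n - 4) = 0).
  { replace (c * (4 ^ n - 4)) with (2 * 4 ^ n * (c - (c / 2 + (c + c) / 4 ^ n))) by (field; lra).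
    rewrite <- Hc; ring. }
  apply Rmult_integral in Hc' as [Hc' | Hc']; unfold c in Hc'; lra.
Qed.

(* If K is stable, aK = aN and M is (K,N)-stabilized, then aM = aK: at order n >= 1
   the discrepancy c satisfies c = c/2. *)
Lemma stabilized_expansion (K N M : R -> R -> R) (aK aN aM : nat -> R) :
  is_mean K -> homogeneous_mean K -> stable_mean K -> sym_asymp_expansion K aK ->
  is_mean N -> homogeneous_mean N -> sym_asymp_expansion N aN ->
  is_mean M -> homogeneous_mean M -> sym_asymp_expansion M aM ->
  stabilized K N M -> (forall n, aK n = aN n) -> forall n, aM n = aK n.
Proof.
  intros HmK HhK HsK HeK HmN HhN HeN HmM HhM HeM Hsd HKN n.
  induction n as [n IH] using (well_founded_induction Wf_nat.lt_wf).
  destruct n as [|m]; [rewrite (expansion_a0 K aK), (expansion_a0 M aM) by assumption; reflexivity|].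
  set (n := S m); assert (Hn : (1 <= n)%nat) by (unfold n; lia).
  pose proof (mean_profiles_differ M K aM aK n HmM HhM HeM HmK HhK HeK IH) as DMK.
  pose proof (mean_profiles_differ K K aK aK n HmK HhK HeK HmK HhK HeK (fun _ _ => eq_refl)) as DKK.
  pose proof (mean_profiles_differ N K aN aK n HmN HhN HeN HmK HhK HeK (fun i _ => eq_sym (HKN i))) as DNK.
  pose proof (proj1 (mean_regular K aK n HmK HhK HeK)) as HK1.
  pose proof (comp_coefficient n _ _ _ _ _ _ _ _ _ _ _ _ Hn
    (mean_regular K aK n HmK HhK HeK) (mean_regular N aN n HmN HhN HeN) HK1 HK1
    DMK DKK DNK DMK (profile_comp M K N M HhK HmN HhN HmM Hsd)
    (profile_comp K K K K HhK HmK HhK HmK HsK)) as Hc.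
  rewrite <- HKN, !Rminus_diag, Rplus_0_r in Hc; unfold Rdiv in Hc; rewrite Rmult_0_l in Hc; lra.
Qed.

(* Polynomials as coefficient lists (constant term first), used to certify the
   explicit order-4 expansion of comp for a quartic profile. *)
Fixpoint peval (p : list R) (u : R) : R :=
  match p with [] => 0 | c :: q => c + u * peval q u end.

Fixpoint padd (p q : list R) : list R :=
  match p, q with
  | [], _ => q
  | _, [] => p
  | a :: p', b :: q' => (a + b) :: padd p' q'
  end.

Definition pscale (c : R) (p : list R) : list R := map (Rmult c) p.

Fixpoint pmul (p q : list R) : list R :=
  match p with [] => [] | a :: p' => padd (pscale a q) (0 :: pmul p' q) end.

Definition psub (p q : list R) : list R := padd p (pscale (-1) q).

Lemma peval_padd p q u : peval (padd p q) u = peval p u + peval q u.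
Proof.
  revert q; induction p as [|a p IH]; intros [|b q]; simpl; try ring.
  rewrite IH; ring.
Qed.

Lemma peval_pscale c p u : peval (pscale c p) u = c * peval p u.
Proof. induction p as [|a p IH]; simpl; [ring|]; rewrite IH; ring. Qed.

Lemma peval_pmul p q u : peval (pmul p q) u = peval p u * peval q u.
Proof.
  induction p as [|a p IH]; simpl; [ring|].
  rewrite peval_padd, peval_pscale; simpl; rewrite IH; ring.
Qed.

Lemma peval_psub p q u : peval (psub p q) u = peval p u - peval q u.
Proof. unfold psub; rewrite peval_padd, peval_pscale; ring. Qed.

Lemma peval_low_zero k p u : (forall i, (i < k)%nat -> nth i p 0 = 0) ->
  peval p u = u ^ k * peval (skipn k p) u.
Proof.
  revert p; induction k as [|k IH]; intros p H; simpl; [ring|].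
  destruct p as [|c q]; simpl; [ring|].
  pose proof (H 0%nat ltac:(lia)) as Hc; simpl in Hc; rewrite Hc.
  rewrite (IH q) by (intros i Hi; exact (H (S i) ltac:(lia))); ring.
Qed.

Lemma BO_peval p : BO 0 (peval p).
Proof.
  induction p as [|c q IH]; simpl.
  - apply BO_ext with (fun _ => 0); [apply near0_eq; reflexivity | apply BO_const].
  - apply BO_plus; [apply BO_const | apply BO_mono with 1%nat; [lia | exact (BO_mul 1 0 _ _ BO_id IH)]].
Qed.

Lemma BO_peval_low_zero k p : (forall i, (i < k)%nat -> nth i p 0 = 0) -> BO k (peval p).
Proof.
  intros H; apply BO_ext with (fun u => u ^ k * peval (skipn k p) u).
  - apply near0_eq; intros u; symmetry; apply peval_low_zero, H.
  - apply BO_mul_bounded; [apply BO_upow | apply BO_peval].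
Qed.

Lemma peval_minus_const p : BO 1 (fun u => peval p u - peval p 0).
Proof.
  destruct p as [|c q]; simpl.
  - apply BO_ext with (fun u => 0 * u ^ 1); [apply near0_eq; intros; ring | apply BO_scal, BO_upow].
  - apply BO_ext with (fun u => u * peval q u); [apply near0_eq; intros; ring|].
    apply BO_mul_bounded; [apply BO_id | apply BO_peval].
Qed.

Lemma Near_peval alpha q : Near alpha (peval (1 :: alpha :: q)).
Proof.
  apply BO_ext with (fun u => u ^ 2 * peval q u); [apply near0_eq; intros; simpl; ring|].
  apply BO_mul_bounded; [apply BO_upow | apply BO_peval].
Qed.

Definition quartic (k1 k2 : R) : list R := [1; 0; k1; 0; k2].

(* For S = a + b and D = b - a one has
   2 S^3 (pmean (quartic k1 k2) a b - t) = S^4 + k1 D^2 S^2 + k2 D^4 - 2 S^3 t. *)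
Definition quartic_residual (k1 k2 : R) (a b t : list R) : list R :=
  psub (padd (padd (pmul (pmul (padd a b) (padd a b)) (pmul (padd a b) (padd a b)))
                   (pscale k1 (pmul (pmul (psub b a) (psub b a)) (pmul (padd a b) (padd a b)))))
             (pscale k2 (pmul (pmul (psub b a) (psub b a)) (pmul (psub b a) (psub b a)))))
       (pscale 2 (pmul (pmul (pmul (padd a b) (padd a b)) (padd a b)) t)).

Lemma pmean_quartic_approx k1 k2 (a b t : list R) :
  peval a 0 + peval b 0 = 2 ->
  (forall i, (i < 5)%nat -> nth i (quartic_residual k1 k2 a b t) 0 = 0) ->
  BO 5 (fun u => pmean (peval (quartic k1 k2)) (peval a u) (peval b u) - peval t u).
Proof.
  intros H0 Hres.
  assert (Hs : BO 1 (fun u => (peval a u + peval b u) - 2)).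
  { rewrite <- H0; apply BO_ext with (fun u => (peval a u - peval a 0) + (peval b u - peval b 0));
      [apply near0_eq; intros; ring | apply BO_plus; apply peval_minus_const]. }
  apply BO_ext with (fun u => peval (quartic_residual k1 k2 a b t) u / (2 * (peval a u + peval b u) ^ 3)).
  - apply (near0_mono (fun u => 2 / 2 <= peval a u + peval b u)); [|exact (BO1_away _ 2 ltac:(lra) Hs)].
    intros u _ Hu; unfold quartic_residual, pmean, ratio, quartic.
    rewrite !peval_psub, !peval_padd, !peval_pscale, !peval_pmul, !peval_psub, !peval_padd; simpl.
    field; lra.
  - apply BO_div with 16; [lra | | apply BO_peval_low_zero, Hres].
    apply BO_ext with (fun u => ((peval a u + peval b u) - 2) *
                                (2 * ((peval a u + peval b u) ^ 2 + 2 * (peval a u + peval b u) + 4)));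
      [apply near0_eq; intros; ring|].
    apply BO_mul_bounded; [exact Hs|].
    apply BO_scal, (BO_sub_lin _ 12).
    apply BO_ext with (fun u => ((peval a u + peval b u) - 2) * ((peval a u + peval b u) + 4));
      [apply near0_eq; intros; ring|].
    apply BO_mul_bounded; [exact Hs | apply (BO_sub_lin _ 6)].
    apply BO_ext with (fun u => (peval a u + peval b u) - 2); [apply near0_eq; intros; ring | exact Hs].
Qed.

(* Order-4 expansions of the inner means and of comp for the quartic profile. *)
Definition inner_left (k1 k2 : R) : list R :=
  [1; -1/2; 3/4 * k1; 1/8 * k1 + 1/2 * k1 ^ 2; 9/16 * k2 + 1/16 * k1 + 1/8 * k1 ^ 2 + 1/4 * k1 ^ 3].

Definition inner_right (k1 k2 : R) : list R :=
  [1; 1/2; 3/4 * k1; -1/8 * k1 - 1/2 * k1 ^ 2; 9/16 * k2 + 1/16 * k1 + 1/8 * k1 ^ 2 + 1/4 * k1 ^ 3].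

Definition outer (k1 k2 : R) : list R :=
  [1; 0; k1; 0; 5/8 * k2 + 1/16 * k1 - 3/16 * k1 ^ 2 - 1/4 * k1 ^ 3].

Ltac check_low_coefficients :=
  let i := fresh "i" in let Hi := fresh "Hi" in
  intros i Hi; do 5 (destruct i as [|i]; [cbn -[Rplus Rmult Ropp Rinv Rdiv pow IZR]; field|]); lia.

Lemma quartic_regular k1 k2 : regular 2 (peval (quartic k1 k2)).
Proof.
  split.
  - exists (Rabs k1 + Rabs k2), 1; split; [lra|]; intros v Hv.
    replace (peval (quartic k1 k2) v - 1) with ((k1 + k2 * v ^ 2) * v ^ 2) by (simpl; ring).
    rewrite Rabs_mult, <- RPow_abs; apply Rmult_le_compat_r; [apply pow_le, Rabs_pos|].
    eapply Rle_trans; [apply Rabs_triang|]; rewrite Rabs_mult, <- RPow_abs.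
    assert (Rabs v ^ 2 <= 1) by (apply pow_le1; pose proof (Rabs_pos v); lra).
    pose proof (Rabs_pos k2); nra.
  - exists (fun i => nth i [1; k1; k2] 0); apply Lv_null; intros v; unfold Psum; simpl; ring.
Qed.

Lemma quartic_comp_approx k1 k2 :
  Lo 4 (fun u => comp (peval (quartic k1 k2)) (peval (quartic k1 k2)) (peval (quartic k1 k2)) u
                 - peval (outer k1 k2) u).
Proof.
  set (P := peval (quartic k1 k2)).
  assert (Hleft : BO 5 (fun u => pmean P (1 - u) (P u) - peval (inner_left k1 k2) u)).
  { apply BO_ext with (fun u => pmean P (peval [1; -1] u) (peval (quartic k1 k2) u) - peval (inner_left k1 k2) u).
    - apply near0_eq; intros u; replace (peval [1; -1] u) with (1 - u) by (simpl; ring); reflexivity.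
    - apply pmean_quartic_approx; [simpl; ring | check_low_coefficients]. }
  assert (Hright : BO 5 (fun u => pmean P (P u) (1 + u) - peval (inner_right k1 k2) u)).
  { apply BO_ext with (fun u => pmean P (peval (quartic k1 k2) u) (peval [1; 1] u) - peval (inner_right k1 k2) u).
    - apply near0_eq; intros u; replace (peval [1; 1] u) with (1 + u) by (simpl; ring); reflexivity.
    - apply pmean_quartic_approx; [simpl; ring | check_low_coefficients]. }
  assert (Houter : BO 5 (fun u => pmean P (peval (inner_left k1 k2) u) (peval (inner_right k1 k2) u)
                                  - peval (outer k1 k2) u))
    by (apply pmean_quartic_approx; [simpl; field | check_low_coefficients]).
  assert (Hzero : differ_by 2 0 P P) by (apply Lv_null; intros; ring).
  assert (Hshift : forall f : R -> R, BO 5 f -> Lo 4 (fun u => f u - 0 * u ^ (2 * 2))).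
  { intros f Hf; apply Lo_ext with f; [apply near0_eq; intros; ring | apply BO_succ_Lo, Hf]. }
  pose proof (pmean_perturb 2 P P 0 0 0 (-1/2) (1/2) _ _ _ _ ltac:(lia) (quartic_regular k1 k2) Hzero
                (Hshift _ Hleft) (Hshift _ Hright) (Near_peval _ _) (Near_peval _ _)) as Hmid.
  replace ((0 + 0) / 2 + 0 * ((1/2 - -1/2) / 2) ^ (2 * 2)) with 0 in Hmid by field.
  apply Lo_ext with (fun u =>
     (pmean P (pmean P (1 - u) (P u)) (pmean P (P u) (1 + u))
      - pmean P (peval (inner_left k1 k2) u) (peval (inner_right k1 k2) u) - 0 * u ^ (2 * 2))
     + (pmean P (peval (inner_left k1 k2) u) (peval (inner_right k1 k2) u) - peval (outer k1 k2) u)).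
  - apply near0_eq; intros u; unfold comp; ring.
  - apply Lo_plus; [exact Hmid | apply BO_succ_Lo, Houter].
Qed.

(* Order 4: a stable mean satisfies a_2 = a_1 (1 + a_1)(1 - 4 a_1) / 6.  Its profile G
   agrees with the quartic P = 1 + a_1 v^2 + a_2 v^4 to order 4, so G = comp G G G
   forces P - comp P P P = o(u^4), whereas P - comp P P P equals a multiple of
   a_2 - a_1 (1 + a_1)(1 - 4 a_1)/6 times u^4 up to O(u^5). *)
Lemma stable_second_coefficient (K : R -> R -> R) (aK : nat -> R) :
  is_mean K -> homogeneous_mean K -> stable_mean K -> sym_asymp_expansion K aK ->
  aK 2%nat = 1 / 6 * aK 1%nat * (1 + aK 1%nat) * (1 - 4 * aK 1%nat).
Proof.
  intros Hm Hh Hs He.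
  set (k1 := aK 1%nat); set (k2 := aK 2%nat); set (G := profile K); set (P := peval (quartic k1 k2)).
  assert (DGP : differ_by 2 0 G P).
  { apply Lv_ext with (fun v => G v - Psum aK 2 v); [|apply profile_expansion; assumption].
    intros v; unfold Psum, P, k1, k2; simpl; rewrite (expansion_a0 K aK Hm He); ring. }
  pose proof (comp_perturb 2 G G G P P P 0 0 0 ltac:(lia) (mean_regular K aK 2 Hm Hh He)
                (mean_regular K aK 2 Hm Hh He) (proj1 (quartic_regular k1 k2))
                (proj1 (quartic_regular k1 k2)) DGP DGP DGP) as Hcomp.
  set (lam := 3/8 * k2 - 1/16 * k1 + 3/16 * k1 ^ 2 + 1/4 * k1 ^ 3).
  assert (Hlam : lam = 0).
  { apply (Lo_unique 4 (fun u => G u - peval (outer k1 k2) u)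
                                 (fun u => comp G G G u - peval (outer k1 k2) u)).
    - apply Lo_ext with (fun u => G u - P u - 0 * u ^ (2 * 2)); [|exact (Lv_restrict _ _ DGP)].
      apply near0_eq; intros u; unfold P, lam; simpl; field.
    - apply Lo_ext with (fun u => (comp G G G u - comp P P P u - (0 / 2 + (0 + 0) / 4 ^ 2) * u ^ (2 * 2))
                                  + (comp P P P u - peval (outer k1 k2) u)).
      + apply near0_eq; intros u; unfold Rdiv; rewrite Rplus_0_r, !Rmult_0_l, Rplus_0_r; ring.
      + apply Lo_plus; [exact Hcomp | apply quartic_comp_approx].
    - generalize (profile_comp K K K K Hh Hm Hh Hm Hs); apply near0_mono.
      intros u _ Hu; fold G in Hu; rewrite Hu; reflexivity. }
  unfold lam in Hlam; unfold k1, k2 in *; lra.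
Qed.

Theorem mainTheorem12 (K N M : R -> R -> R) (aK aN aM : nat -> R) :
  is_mean K -> symmetric_mean K -> homogeneous_mean K -> stable_mean K ->
  is_mean N -> symmetric_mean N -> homogeneous_mean N -> stable_mean N ->
  is_mean M -> symmetric_mean M -> homogeneous_mean M ->
  sym_asymp_expansion K aK -> sym_asymp_expansion N aN ->
  sym_asymp_expansion M aM ->
  stabilizable K N M -> stabilized K N M ->
  (aK 1%nat = aN 1%nat /\ aN 1%nat = aM 1%nat) /\
  (forall n : nat, aK n = aN n) /\
  aM 2%nat = 1 / 6 * aM 1%nat * (1 + aM 1%nat) * (1 - 4 * aM 1%nat).
Proof.
  intros HmK _ HhK HsK HmN _ HhN HsN HmM _ HhM HeK HeN HeM Hsz Hsd.
  destruct (first_coefficients K N M aK aN aM HmK HhK HeK HmN HhN HeN HmM HhM HeM Hsz Hsd)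
    as [HKM HNM].
  assert (HKN : forall n, aK n = aN n)
    by (apply (stable_expansion_unique K N); auto; lra).
  pose proof (stabilized_expansion K N M aK aN aM HmK HhK HsK HeK HmN HhN HeN HmM HhM HeM Hsd HKN)
    as HMK.
  split; [split; lra | split; [exact HKN|]].
  rewrite !HMK; exact (stable_second_coefficient K aK HmK HhK HsK HeK).
Qed.
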